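(* If a $2$-step nilpotent real Lie algebra $\mathfrak{n}$ admits a $3$-step complex structure, then $\dim[\mathfrak{n},\mathfrak{n}]\geq3$.
   Context: A complex structure on a real Lie algebra $\mathfrak{g}$ is a linear map $J:\mathfrak{g}\to\mathfrak{g}$ with $J^2=-I$ and $N_J(x,y):=[x,y]+J([Jx,y]+[x,Jy])-[Jx,Jy]=0$ for all $x,y\in\mathfrak{g}$. Given such $J$, define inductively $\mathfrak{a}_0(J)=0$ and $\mathfrak{a}_\ell(J)=\{x\in\mathfrak{g}: [x,\mathfrak{g}]\subset\mathfrak{a}_{\ell-1}(J)\text{ and }[Jx,\mathfrak{g}]\subset\mathfrak{a}_{\ell-1}(J)\}$ for $\ell\ge1$. $J$ is called nilpotent if $\mathfrak{a}_t(J)=\mathfrak{g}$ for some positive integer $t$, and $t$-step if $t$ is the smallest such integer. A Lie algebra $\mathfrak{n}$ is $2$-step nilpotent if it is non-abelian and $[\mathfrak{n},\mathfrak{n}]\subset\mathfrak{z}$ (the center). *)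

From HB Require Import structures.
From mathcomp Require Import all_boot all_order all_algebra.
From mathcomp Require Import reals.
Set Implicit Arguments. Unset Strict Implicit. Unset Printing Implicit Defensive.
Import Order.TTheory GRing.Theory Num.Theory.
Local Open Scope ring_scope.

Section LieDefs.
Variables (R : realType) (V : vectType R).

Definition is_lie_bracket (br : V -> V -> V) : Prop :=
  [/\ (forall (a : R) (x y z : V), br (a *: x + y) z = a *: br x z + br y z),
      (forall (a : R) (x y z : V), br z (a *: x + y) = a *: br z x + br z y),
      (forall x : V, br x x = 0) &
      (forall x y z : V, br x (br y z) + br y (br z x) + br z (br x y) = 0)].

Definition nijenhuis (br : V -> V -> V) (J : 'End(V)) (x y : V) : V :=
  br x y + J (br (J x) y + br x (J y)) - br (J x) (J y).

Definition is_complex_structure (br : V -> V -> V) (J : 'End(V)) : Prop :=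
  (forall x : V, J (J x) = - x) /\ (forall x y : V, nijenhuis br J x y = 0).

Fixpoint a_ser (br : V -> V -> V) (J : 'End(V)) (l : nat) : V -> Prop :=
  match l with
  | 0 => fun x => x = 0
  | l'.+1 => fun x => forall y : V, a_ser br J l' (br x y) /\ a_ser br J l' (br (J x) y)
  end.

Definition t_step_complex (br : V -> V -> V) (J : 'End(V)) (t : nat) : Prop :=
  (0 < t)%N /\ (forall x : V, a_ser br J t x) /\
  (forall s : nat, (0 < s < t)%N -> ~ (forall x : V, a_ser br J s x)).

Definition two_step_nilpotent (br : V -> V -> V) : Prop :=
  (exists x y : V, br x y != 0) /\ (forall x y z : V, br (br x y) z = 0).

(** The derived algebra [n,n]: the span of all brackets. Since br is bilinear,
    this is the span of the brackets of pairs of basis vectors. *)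
Definition derived_alg (br : V -> V -> V) : {vspace V} :=
  <<[seq br u v | u <- (vbasis fullv : seq V), v <- (vbasis fullv : seq V)]>>%VS.

End LieDefs.

(* If [n,n] had dimension at most 2, the complex structure would already be
   2-step.  Indeed, let w be central and suppose v := [Jw, z] <> 0.  The
   Nijenhuis condition with w central gives Jv = [Jw, Jz], so v and Jv are two
   independent vectors of [n,n] (J has no real eigenvalue); hence [n,n] is
   spanned by them and is J-stable.  For w in [n,n] this puts Jw in [n,n],
   which is central, so v = 0 after all.  Thus J maps [n,n] into the centre,
   which is exactly what a_2(J) = n requires. *)

From HB Require Import structures.
From mathcomp Require Import all_boot all_order all_algebra.
From mathcomp Require Import reals.
Set Implicit Arguments. Unset Strict Implicit. Unset Printing Implicit Defensive.
Import GRing.Theory Num.Theory.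
Local Open Scope ring_scope.

Section AlmostComplex.
Variables (R : realFieldType) (V : vectType R) (J : 'End(V)).
Hypothesis JJ : forall x : V, J (J x) = - x.

Lemma almost_complex_neq0 v : v != 0 -> J v != 0.
Proof.
apply: contra => /eqP Jv0; have := JJ v.
by rewrite Jv0 linear0 => /eqP; rewrite eq_sym oppr_eq0.
Qed.

Lemma free_almost_complex_pair v : v != 0 -> free [:: v; J v].
Proof.
move=> nz_v; rewrite free_cons span_seq1 seq1_free almost_complex_neq0 // andbT.
apply/negP => /vlineP [k v_kJv].
have : (1 + k ^+ 2) *: v = 0.
  have Jv : J v = - (k *: v) by rewrite {1}v_kJv linearZ /= JJ scalerN.
  by rewrite scalerDl scale1r expr2 -scalerA -[k *: v]opprK -Jv scalerN -v_kJv subrr.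
by apply/eqP; rewrite scaler_eq0 (negPf nz_v) orbF lt0r_neq0 // ltr_pwDl ?sqr_ge0.
Qed.

(* v and J v are independent, so they span U. *)
Lemma almost_complex_stable_dim2 (U : {vspace V}) v w :
  v != 0 -> v \in U -> J v \in U -> (\dim U <= 2)%N -> w \in U -> J w \in U.
Proof.
move=> nz_v Uv UJv dimU Uw.
have defU : <<[:: v; J v]>>%VS = U.
  apply/eqP; rewrite eqEdim (eqP (free_almost_complex_pair nz_v)) /=.
  by rewrite dimU andbT; apply/span_subvP => u; rewrite !inE => /orP[]/eqP->.
move: Uw; rewrite -defU {1}span_cons span_seq1.
case/memv_addP=> _ /vlineP[a ->] [_ /vlineP[b ->] ->].
rewrite linearD !linearZ /= JJ scalerN.
by rewrite memvD ?memvN ?memvZ ?memv_span ?inE ?eqxx ?orbT.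
Qed.

End AlmostComplex.

Section TwoStep.
Variables (R : realType) (V : vectType R) (br : V -> V -> V).
Hypothesis lie_br : is_lie_bracket br.
Hypothesis brackets_central : forall x y z : V, br (br x y) z = 0.

Lemma br_addl x y z : br (x + y) z = br x z + br y z.
Proof. by case: lie_br => linl _ _ _; rewrite -[x in LHS]scale1r linl scale1r. Qed.

Lemma br_addr x y z : br z (x + y) = br z x + br z y.
Proof. by case: lie_br => _ linr _ _; rewrite -[x in LHS]scale1r linr scale1r. Qed.

Lemma br0l z : br 0 z = 0.
Proof. by apply: (@addrI _ (br 0 z)); rewrite -br_addl !addr0. Qed.

Lemma br0r z : br z 0 = 0.
Proof. by apply: (@addrI _ (br z 0)); rewrite -br_addr !addr0. Qed.

Lemma br_scalel a x z : br (a *: x) z = a *: br x z.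
Proof. by case: lie_br => linl _ _ _; rewrite -[a *: x]addr0 linl br0l addr0. Qed.

Lemma br_scaler a x z : br z (a *: x) = a *: br z x.
Proof. by case: lie_br => _ linr _ _; rewrite -[a *: x]addr0 linr br0r addr0. Qed.

Lemma vbasis_ind (P : V -> Prop) :
    P 0 -> (forall x y, P x -> P y -> P (x + y)) -> (forall a x, P x -> P (a *: x)) ->
  (forall u, u \in (vbasis fullv : seq V) -> P u) -> forall x, P x.
Proof.
move=> P0 PD PZ Pb x; rewrite (coord_vbasis (memvf x)).
by apply: (big_ind P) => // i _; apply/PZ/Pb/mem_nth; rewrite size_tuple.
Qed.

Lemma memv_derived x y : br x y \in derived_alg br.
Proof.
elim/vbasis_ind: x y => [y | x x' IHx IHx' y | a x IHx y | u b_u].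
- by rewrite br0l mem0v.
- by rewrite br_addl memvD.
- by rewrite br_scalel memvZ.
elim/vbasis_ind => [| y y' IHy IHy' | a y IHy | v b_v].
- by rewrite br0r mem0v.
- by rewrite br_addr memvD.
- by rewrite br_scaler memvZ.
by apply: memv_span; apply: allpairs_f.
Qed.

Lemma derived_central w z : w \in derived_alg br -> br w z = 0.
Proof.
rewrite /derived_alg => /(@coord_span _ _ _ (in_tuple _))->.
apply: (big_ind (fun u => br u z = 0)) => [|x y brx bry|i _].
- exact: br0l.
- by rewrite br_addl brx bry addr0.
have /allpairsP[[u v] [_ _ ->]] := mem_nth 0 (ltn_ord i).
by rewrite br_scalel brackets_central scaler0.
Qed.

Variable J : 'End(V).
Hypothesis J_complex : is_complex_structure br J.

Lemma nijenhuis_central w z :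
  (forall u, br w u = 0) -> J (br (J w) z) = br (J w) (J z).
Proof.
move=> w_central; case: J_complex => _ /(_ w z) /eqP.
by rewrite /nijenhuis !w_central add0r addr0 subr_eq0 => /eqP.
Qed.

Lemma J_derived_central w z :
  (\dim (derived_alg br) <= 2)%N -> w \in derived_alg br -> br (J w) z = 0.
Proof.
move=> dim_derived derived_w; apply/eqP; apply: contraT => nz_v.
have Jv : J (br (J w) z) = br (J w) (J z).
  by apply: nijenhuis_central => u; exact: derived_central.
have derived_Jw : J w \in derived_alg br.
  case: J_complex => JJ _.
  by apply: (almost_complex_stable_dim2 JJ nz_v); rewrite ?Jv ?memv_derived.
by rewrite derived_central ?eqxx in nz_v.
Qed.

End TwoStep.

Theorem mainTheorem6 (R : realType) (V : vectType R) (br : V -> V -> V) :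
  is_lie_bracket br -> two_step_nilpotent br ->
  (exists J : 'End(V), is_complex_structure br J /\ t_step_complex br J 3) ->
  (3 <= \dim (derived_alg br))%N.
Proof.
move=> lie_br [_ brackets_central] [J [J_complex [_ [_ minimal]]]].
rewrite leqNgt; apply/negP => dim_derived.
apply: (minimal 2%N erefl) => x y; split=> z; split;
  by [ apply: brackets_central
     | apply: J_derived_central; rewrite ?(memv_derived lie_br) ].
Qed.
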